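(* Let $\tau>0$, let $\Gamma^0$ be a closed polyhedral surface with $\boldsymbol X^0\in[\mathbb K^0]^3$ the identity and $\mathcal H^0\in\mathbb K^0$ given. Suppose that for each $m\ge0$, $(\boldsymbol X^{m+1},V^{m+1},\mathcal H^{m+1})\in[\mathbb K^m]^3\times\mathbb K^m\times\mathbb K^m$ satisfies $$\Big(\tfrac{\boldsymbol X^{m+1}-\boldsymbol X^m}{\tau}\cdot\boldsymbol n^m,\phi^h\Big)^h_{\Gamma^m}=(V^{m+1},\phi^h)^h_{\Gamma^m}\quad\forall\phi^h\in\mathbb K^m,$$ $$(V^{m+1}\boldsymbol n^m,\boldsymbol\omega^h)^h_{\Gamma^m}=\Big\langle\mathcal H^{m+1}\mathbf A^m-\boldsymbol n^m(\nabla_\Gamma\mathcal H^{m+1})^T-\tfrac12(\mathcal H^{m+1})^2\nabla_\Gamma\boldsymbol X^{m+1},\nabla_\Gamma\boldsymbol\omega^h\Big\rangle^h_{\Gamma^m}\quad\forall\boldsymbol\omega^h\in[\mathbb K^m]^3,$$ $$(\mathcal H^{m+1}-\mathcal H^m,\varphi^h)^h_{\Gamma^m}=\big\langle\nabla_\Gamma(\boldsymbol X^{m+1}-\boldsymbol X^m),\boldsymbol n^m(\nabla_\Gamma\varphi^h)^T-\varphi^h\mathbf A^m\big\rangle^h_{\Gamma^m}\quad\forall\varphi^h\in\mathbb K^m,$$ and $\Gamma^{m+1}:=\boldsymbol X^{m+1}(\Gamma^m)$ is again a polyhedral surface with nondegenerate triangles. Then for every $\tau>0$ the discrete Willmore energy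 $W^m:=\frac12(\mathcal H^m,\mathcal H^m)^h_{\Gamma^m}$ satisfies $$W^{m+1}\le W^m\le W^0=\tfrac12(\mathcal H^0,\mathcal H^0)^h_{\Gamma^0}\qquad\forall m\ge0.$$
   Context: Polyhedral setting: $\Gamma^m=\bigcup_{j=1}^J\overline{\sigma_j^m}\subset\mathbb R^3$ is a closed polyhedral surface made of nonoverlapping nondegenerate triangles $\sigma_j^m$ with vertices $\boldsymbol q^m_{j_1},\boldsymbol q^m_{j_2},\boldsymbol q^m_{j_3}$, ordered so that $\mathcal J\{\sigma_j^m\}=(\boldsymbol q^m_{j_2}-\boldsymbol q^m_{j_1})\times(\boldsymbol q^m_{j_3}-\boldsymbol q^m_{j_1})$ points outward; $|\sigma_j^m|=\frac12|\mathcal J\{\sigma_j^m\}|$, and $\boldsymbol n^m|_{\sigma_j^m}=\mathcal J\{\sigma_j^m\}/|\mathcal J\{\sigma_j^m\}|$ (piecewise constant outward normal). $\mathbb K^m$ is the space of continuous functions on $\Gamma^m$ that are affine on each triangle. $\boldsymbol X^m\in[\mathbb K^m]^3$ is the identity on $\Gamma^m$; $\boldsymbol X^{m+1}\in[\mathbb K^m]^3$ parameterizes $\Gamma^{m+1}$ with triangles $\sigma_j^{m+1}=\boldsymbol X^{m+1}(\sigma_j^m)$ (same connectivity), so functions in $\mathbb K^m$ and $\mathbb K^{m+1}$ are identified through their vertex values. Discrete surface gradient on $\Gamma^m$: for a function $f$ with vertex values (equivalently its piecewise linear interpolant), on a triangle $\sigma=\{\boldsymbol q_1,\boldsymbol q_2,\boldsymbol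 q_3\}$ with normal $\boldsymbol n$, $$\nabla_\Gamma f|_\sigma=\frac{f(\boldsymbol q_1)(\boldsymbol q_2-\boldsymbol q_3)\times\boldsymbol n+f(\boldsymbol q_2)(\boldsymbol q_3-\boldsymbol q_1)\times\boldsymbol n+f(\boldsymbol q_3)(\boldsymbol q_1-\boldsymbol q_2)\times\boldsymbol n}{|\mathcal J\{\sigma\}|};$$ for vector functions $\nabla_\Gamma\boldsymbol f$ is the matrix with $i$-th row $(\nabla_\Gamma f_i)^T$. $\mathbf A^m=\nabla_\Gamma\boldsymbol w^m$ where $\boldsymbol w^m\in[\mathbb K^m]^3$ is a given (vertex unit normal) field. Mass-lumped inner products: for scalar/vector functions $u,v$ that are continuous on each closed triangle, $$(u,v)^h_{\Gamma^m}=\tfrac13\sum_{j=1}^J\sum_{k=1}^3|\sigma_j^m|\,u((\boldsymbol q^m_{j_k})^-)\cdot v((\boldsymbol q^m_{j_k})^-),$$ and for matrix functions $\langle\boldsymbol U,\boldsymbol V\rangle^h_{\Gamma^m}=\tfrac13\sum_j\sum_k|\sigma_j^m|\,\boldsymbol U((\boldsymbol q^m_{j_k})^-):\boldsymbol V((\boldsymbol q^m_{j_k})^-)$, where $g((\boldsymbol q)^-)$ is the limit of $g$ at vertex $\boldsymbol q$ from within $\sigma_j^m$, and $\boldsymbol U:\boldsymbol V=\mathrm{Tr}(\boldsymbol U^T\boldsymbol V)$. *)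

From HB Require Import structures.
From mathcomp Require Import all_boot all_order all_algebra.
From mathcomp Require Import reals.
Set Implicit Arguments.
Unset Strict Implicit.
Unset Printing Implicit Defensive.
Import Order.TTheory GRing.Theory Num.Theory.
Local Open Scope ring_scope.

Section Polyhedral.
Variable R : realType.

Definition vec3 := 'rV[R]_3.
Definition mat3 := 'M[R]_3.

Definition c0 : 'I_3 := @Ordinal 3 0 isT.
Definition c1 : 'I_3 := @Ordinal 3 1 isT.
Definition c2 : 'I_3 := @Ordinal 3 2 isT.

Definition ph_dot (u v : vec3) : R := \sum_(i < 3) u 0 i * v 0 i.
Definition ph_vnorm (u : vec3) : R := Num.sqrt (ph_dot u u).

Definition ph_cross (u v : vec3) : vec3 :=
  \row_(i < 3)
    (if i == c0 then u 0 c1 * v 0 c2 - u 0 c2 * v 0 c1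
     else if i == c1 then u 0 c2 * v 0 c0 - u 0 c0 * v 0 c2
     else u 0 c0 * v 0 c1 - u 0 c1 * v 0 c0).

Definition ph_frob (U V : mat3) : R := \tr (U^T *m V).

Definition ph_outer (a b : vec3) : mat3 := a^T *m b.

(* A triangulation with nV vertices and J triangles; triangle j has vertex
   indices tri j c0, tri j c1, tri j c2 (ordered: q_{j_1}, q_{j_2}, q_{j_3}).
   A polyhedral surface is given by the connectivity tri and vertex positions
   P : 'I_nV -> vec3.  Functions in K^m are given by their vertex values. *)
Variables (nV J : nat) (tri : 'I_J -> 'I_3 -> 'I_nV).

Definition ph_vtx (P : 'I_nV -> vec3) (j : 'I_J) (k : 'I_3) : vec3 := P (tri j k).

Definition ph_jac (P : 'I_nV -> vec3) (j : 'I_J) : vec3 :=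
  ph_cross (ph_vtx P j c1 - ph_vtx P j c0) (ph_vtx P j c2 - ph_vtx P j c0).

Definition ph_area (P : 'I_nV -> vec3) (j : 'I_J) : R := ph_vnorm (ph_jac P j) / 2.

Definition ph_normal (P : 'I_nV -> vec3) (j : 'I_J) : vec3 :=
  (ph_vnorm (ph_jac P j))^-1 *: ph_jac P j.

Definition ph_gradS (P : 'I_nV -> vec3) (f : 'I_nV -> R) (j : 'I_J) : vec3 :=
  let q1 := ph_vtx P j c0 in let q2 := ph_vtx P j c1 in let q3 := ph_vtx P j c2 in
  let n := ph_normal P j in
  (ph_vnorm (ph_jac P j))^-1 *:
    (f (tri j c0) *: ph_cross (q2 - q3) n + f (tri j c1) *: ph_cross (q3 - q1) n
     + f (tri j c2) *: ph_cross (q1 - q2) n).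

Definition ph_gradV (P : 'I_nV -> vec3) (F : 'I_nV -> vec3) (j : 'I_J) : mat3 :=
  \matrix_(i < 3, l < 3) (ph_gradS P (fun v => F v 0 i) j) 0 l.

(* mass-lumped inner products; a function that is continuous on each closed
   triangle is represented by g j k = its limit at vertex k of triangle j
   from within sigma_j *)
Definition ph_ip_s (P : 'I_nV -> vec3) (u v : 'I_J -> 'I_3 -> R) : R :=
  3^-1 * \sum_(j < J) \sum_(k < 3) ph_area P j * (u j k * v j k).
Definition ph_ip_v (P : 'I_nV -> vec3) (u v : 'I_J -> 'I_3 -> vec3) : R :=
  3^-1 * \sum_(j < J) \sum_(k < 3) ph_area P j * ph_dot (u j k) (v j k).
Definition ph_ip_m (P : 'I_nV -> vec3) (U V : 'I_J -> 'I_3 -> mat3) : R :=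
  3^-1 * \sum_(j < J) \sum_(k < 3) ph_area P j * ph_frob (U j k) (V j k).

Definition ph_lift_s (f : 'I_nV -> R) : 'I_J -> 'I_3 -> R := fun j k => f (tri j k).
Definition ph_lift_v (f : 'I_nV -> vec3) : 'I_J -> 'I_3 -> vec3 :=
  fun j k => f (tri j k).

(* closed surface (combinatorial part): every triangle has three distinct
   vertices, and every oriented edge (a,b) of a triangle is matched by exactly
   one triangle containing the oppositely oriented edge (b,a) *)
Definition ph_closed_mesh : Prop :=
  (forall j : 'I_J, injective (tri j)) /\
  (forall (j : 'I_J) (k : 'I_3),
     #|[set j' : 'I_J | [exists k' : 'I_3,
          (tri j' k' == tri j (ordS k)) && (tri j' (ordS k') == tri j k)]]| = 1%N).

Definition ph_nondegenerate (P : 'I_nV -> vec3) : Prop :=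
  forall j : 'I_J, ph_jac P j != 0.

Definition ph_willmore (P : 'I_nV -> vec3) (H : 'I_nV -> R) : R :=
  2^-1 * ph_ip_s P (ph_lift_s H) (ph_lift_s H).

(* the three equations of the scheme at step m, on Gamma^m with vertex
   positions Xm, A^m = grad_Gamma w^m *)
Definition ph_scheme_step (tau : R) (Xm : 'I_nV -> vec3) (wm : 'I_nV -> vec3)
  (Hm : 'I_nV -> R) (X1 : 'I_nV -> vec3) (V1 H1 : 'I_nV -> R) : Prop :=
  let A := ph_gradV Xm wm in
  let n := ph_normal Xm in
  (forall phi : 'I_nV -> R,
     ph_ip_s Xm (fun j k => ph_dot (tau^-1 *: (X1 (tri j k) - Xm (tri j k))) (n j))
             (ph_lift_s phi)
     = ph_ip_s Xm (ph_lift_s V1) (ph_lift_s phi)) /\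
  (forall om : 'I_nV -> vec3,
     ph_ip_v Xm (fun j k => V1 (tri j k) *: n j) (ph_lift_v om)
     = ph_ip_m Xm (fun j k => H1 (tri j k) *: A j - ph_outer (n j) (ph_gradS Xm H1 j)
                            - (2^-1 * H1 (tri j k) ^+ 2) *: ph_gradV Xm X1 j)
               (fun j k => ph_gradV Xm om j)) /\
  (forall vphi : 'I_nV -> R,
     ph_ip_s Xm (ph_lift_s (fun v => H1 v - Hm v)) (ph_lift_s vphi)
     = ph_ip_m Xm (fun j k => ph_gradV Xm (fun v => X1 v - Xm v) j)
               (fun j k => ph_outer (n j) (ph_gradS Xm vphi j)
                           - vphi (tri j k) *: A j)).

End Polyhedral.

(* Test the three equations of the scheme with V^{m+1}, X^{m+1} - X^m and H^{m+1} and add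
   them: the terms in A^m and n^m (grad H^{m+1})^T cancel pairwise, leaving
     (H^{m+1} - H^m, H^{m+1}) + tau |V^{m+1}|^2 + 1/2 <(H^{m+1})^2 grad X^{m+1}, grad (X^{m+1} - X^m)> = 0.
   On each triangle, |sigma^{m+1}| <= |sigma^m| (1 + grad X^{m+1} : grad (X^{m+1} - X^m)): the area
   ratio is the product of the two singular values of grad X^{m+1}, hence at most
   1/2 |grad X^{m+1}|^2 by AM-GM, and |grad X^m|^2 = 2.  Weighting by (H^{m+1})^2 and inserting the
   identity gives W^{m+1} <= W^m - 1/2 |H^{m+1} - H^m|^2 - tau |V^{m+1}|^2. *)

From HB Require Import structures.
From mathcomp Require Import all_boot all_order all_algebra.
From mathcomp Require Import reals.
From mathcomp Require Import ring.
Import Order.TTheory GRing.Theory Num.Theory.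
Set Implicit Arguments.
Unset Strict Implicit.
Unset Printing Implicit Defensive.
Local Open Scope ring_scope.

(* The difference of the two sides is the discriminant of [t |-> det (t G - G')] for
   [G = (a b; b c)] and [G' = (p q; q r)], whose roots are real since [G] is semidefinite
   up to sign. *)
Lemma gram_cofactor_ineq (R : realDomainType) (a b c p q r : R) : 0 <= a * c - b ^+ 2 ->
  4 * (a * c - b ^+ 2) * (p * r - q ^+ 2) <= (c * p - 2 * b * q + a * r) ^+ 2.
Proof.
case: (eqVneq a 0) => [->|a_neq0] d_ge0.
  rewrite mul0r sub0r oppr_ge0 in d_ge0.
  have -> : b ^+ 2 = 0 by apply: le_anti; rewrite d_ge0 sqr_ge0.
  by rewrite mul0r subrr mulr0 mul0r sqr_ge0.
have a2_gt0 : 0 < a ^+ 2 by rewrite exprn_even_gt0.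
rewrite -subr_ge0 -(pmulr_rge0 _ a2_gt0).
have -> : a ^+ 2 * ((c * p - 2 * b * q + a * r) ^+ 2 - 4 * (a * c - b ^+ 2) * (p * r - q ^+ 2))
        = (a * (a * r - c * p) - 2 * b * (a * q - b * p)) ^+ 2
          + 4 * (a * c - b ^+ 2) * (a * q - b * p) ^+ 2 by ring.
by rewrite addr_ge0 ?sqr_ge0 // mulr_ge0 ?sqr_ge0 // mulr_ge0.
Qed.

Lemma sqrt_le_ratio (R : rcfType) (d E T : R) : 0 < d -> 0 <= E -> 0 <= T ->
  4 * d * E <= T ^+ 2 -> Num.sqrt E <= T / (2 * Num.sqrt d).
Proof.
move=> d_gt0 E_ge0 T_ge0 dET.
have sd_gt0 : 0 < 2 * Num.sqrt d by rewrite mulr_gt0 ?sqrtr_gt0.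
have lhs_ge0 : 0 <= Num.sqrt E * (2 * Num.sqrt d) by rewrite mulr_ge0 ?sqrtr_ge0 // ltW.
rewrite ler_pdivlMr // -ler_sqr ?nnegrE // !exprMn !sqr_sqrtr ?(ltW d_gt0) //.
by have -> : E * (2 ^+ 2 * d) = 4 * d * E by ring.
Qed.

Section VectorAlgebra.
Variable R : realType.
Implicit Types (u v x y : vec3 R) (U V : mat3 R).

Lemma ord3P (i : 'I_3) : [\/ i = c0, i = c1 | i = c2].
Proof.
by case: i => [[|[|[|//]]] ?]; [apply: Or31|apply: Or32|apply: Or33]; apply: val_inj.
Qed.

Lemma sum_ord3 (F : 'I_3 -> R) : \sum_(i < 3) F i = F c0 + F c1 + F c2.
Proof.
rewrite !big_ord_recl big_ord0 addr0 addrA.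
by congr (F _ + F _ + F _); apply: val_inj.
Qed.

Lemma dotE u v : ph_dot u v = u 0 c0 * v 0 c0 + u 0 c1 * v 0 c1 + u 0 c2 * v 0 c2.
Proof. exact: sum_ord3. Qed.

Lemma dotC u v : ph_dot u v = ph_dot v u.
Proof. by rewrite !dotE; ring. Qed.

Lemma dotZl (k : R) u v : ph_dot (k *: u) v = k * ph_dot u v.
Proof. by rewrite !dotE !mxE; ring. Qed.

Lemma dotZr (k : R) u v : ph_dot u (k *: v) = k * ph_dot u v.
Proof. by rewrite dotC dotZl dotC. Qed.

Lemma dot_cross x y u v :
  ph_dot (ph_cross x y) (ph_cross u v) = ph_dot x u * ph_dot y v - ph_dot x v * ph_dot y u.
Proof. by rewrite !dotE !mxE /=; ring. Qed.

Lemma crossDl x y z : ph_cross (x + y) z = ph_cross x z + ph_cross y z.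
Proof. by apply/rowP => i; case: (ord3P i) => ->; rewrite !mxE /=; ring. Qed.

Lemma crossZl (k : R) x y : ph_cross (k *: x) y = k *: ph_cross x y.
Proof. by apply/rowP => i; case: (ord3P i) => ->; rewrite !mxE /=; ring. Qed.

Lemma crossZr (k : R) x y : ph_cross x (k *: y) = k *: ph_cross x y.
Proof. by apply/rowP => i; case: (ord3P i) => ->; rewrite !mxE /=; ring. Qed.

Lemma dot_cross_orth x y z : ph_dot x z = 0 -> ph_dot y z = 0 ->
  ph_dot (ph_cross x z) (ph_cross y z) = ph_dot x y * ph_dot z z.
Proof. by rewrite dot_cross (dotC z y) => -> ->; rewrite mulr0 subr0. Qed.

Lemma dot_self_ge0 u : 0 <= ph_dot u u.
Proof. by rewrite dotE -!expr2 !addr_ge0 ?sqr_ge0. Qed.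

Lemma dot_self_gt0 u : u != 0 -> 0 < ph_dot u u.
Proof.
move=> u_neq0; rewrite lt_def dot_self_ge0 andbT; apply: contra u_neq0.
rewrite dotE -!expr2 !paddr_eq0 ?addr_ge0 ?sqr_ge0 // !sqrf_eq0 => /andP[/andP[u0 u1] u2].
by apply/eqP/rowP => i; rewrite mxE; case: (ord3P i) => ->; apply/eqP.
Qed.

Lemma frobE U V : ph_frob U V =
  U c0 c0 * V c0 c0 + U c0 c1 * V c0 c1 + U c0 c2 * V c0 c2 +
  (U c1 c0 * V c1 c0 + U c1 c1 * V c1 c1 + U c1 c2 * V c1 c2) +
  (U c2 c0 * V c2 c0 + U c2 c1 * V c2 c1 + U c2 c2 * V c2 c2).
Proof.
by rewrite /ph_frob /mxtrace sum_ord3 !mxE !sum_ord3 !mxE; ring.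
Qed.

Lemma frob_self_ge0 U : 0 <= ph_frob U U.
Proof. by rewrite frobE -!expr2 !addr_ge0 ?sqr_ge0. Qed.

Lemma frob_half_le (G0 G1 : mat3 R) :
  ph_frob G0 G0 = 2 -> 2^-1 * ph_frob G1 G1 <= 1 + ph_frob G1 (G1 - G0).
Proof.
move=> G0_2; rewrite -subr_ge0.
have : 2^-1 * ph_frob G0 G0 + ph_frob G1 (G1 - G0) - 2^-1 * ph_frob G1 G1 =
       2^-1 * ph_frob (G1 - G0) (G1 - G0) by rewrite !frobE !mxE; field.
rewrite G0_2 mulVf ?pnatr_eq0 // => ->.
by rewrite mulr_ge0 ?invr_ge0 ?ler0n ?frob_self_ge0.
Qed.

Lemma frob_cancel (A O G D : mat3 R) (h c : R) :
  ph_frob D (O - h *: A) + ph_frob (h *: A - O - c *: G) D + c * ph_frob G D = 0.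
Proof. by rewrite !frobE !mxE; ring. Qed.

End VectorAlgebra.

Section SurfaceGradient.
Variables (R : realType) (nV J : nat) (tri : 'I_J -> 'I_3 -> 'I_nV).
Implicit Types (P Q : 'I_nV -> vec3 R) (f g : 'I_nV -> R) (j : 'I_J).

Definition edge P j k : vec3 R := P (tri j k) - P (tri j c0).

Definition grad_numerator P f j : vec3 R :=
  f (tri j c0) *: (P (tri j c1) - P (tri j c2))
  + f (tri j c1) *: (P (tri j c2) - P (tri j c0))
  + f (tri j c2) *: (P (tri j c0) - P (tri j c1)).

(* [tr (adj G_P * G_Q)], with [G_P], [G_Q] the Gram matrices of the edge vectors of triangle [j]. *)
Definition gram_pairing P Q j : R :=
  ph_dot (edge P j c2) (edge P j c2) * ph_dot (edge Q j c1) (edge Q j c1)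
  - 2 * ph_dot (edge P j c1) (edge P j c2) * ph_dot (edge Q j c1) (edge Q j c2)
  + ph_dot (edge P j c1) (edge P j c1) * ph_dot (edge Q j c2) (edge Q j c2).

Lemma area_ge0 P j : 0 <= ph_area tri P j.
Proof. by rewrite /ph_area divr_ge0 ?sqrtr_ge0 ?ler0n. Qed.

Lemma jacE P j : ph_jac tri P j = ph_cross (edge P j c1) (edge P j c2).
Proof. by []. Qed.

Lemma dot_jac P j : ph_dot (ph_jac tri P j) (ph_jac tri P j) =
  ph_dot (edge P j c1) (edge P j c1) * ph_dot (edge P j c2) (edge P j c2)
  - ph_dot (edge P j c1) (edge P j c2) ^+ 2.
Proof. by rewrite jacE dot_cross (dotC (edge P j c2)) expr2. Qed.

Lemma gradS_cross P f j : ph_gradS tri P f j =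
  (ph_vnorm (ph_jac tri P j))^-1 ^+ 2 *: ph_cross (grad_numerator P f j) (ph_jac tri P j).
Proof.
rewrite /ph_gradS /ph_normal !crossZr /grad_numerator.
rewrite (crossDl (_ + _)) (crossDl (_ *: _)) !crossZl !scalerDr !scalerA.
by congr (_ + _ + _); congr (_ *: _); ring.
Qed.

Lemma dot_grad_numerator_jac P f j : ph_dot (grad_numerator P f j) (ph_jac tri P j) = 0.
Proof. by rewrite dotE /grad_numerator /ph_jac /ph_vtx !mxE /=; ring. Qed.

Lemma dot_gradS P f g j : ph_jac tri P j != 0 ->
  ph_dot (ph_gradS tri P f j) (ph_gradS tri P g j) =
  (ph_dot (ph_jac tri P j) (ph_jac tri P j))^-1
  * ph_dot (grad_numerator P f j) (grad_numerator P g j).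
Proof.
move=> jac_neq0.
rewrite !gradS_cross dotZl dotZr dot_cross_orth ?dot_grad_numerator_jac //.
move: (ph_dot (grad_numerator P f j) _) => x.
have normJ_sqr : ph_vnorm (ph_jac tri P j) ^+ 2 = ph_dot (ph_jac tri P j) (ph_jac tri P j).
  by rewrite sqr_sqrtr ?dot_self_ge0.
have normJ_neq0 : ph_vnorm (ph_jac tri P j) != 0.
  by rewrite sqrtr_eq0 -ltNge dot_self_gt0.
rewrite -normJ_sqr; field.
by rewrite normJ_neq0.
Qed.

Lemma gradVE P (F : 'I_nV -> vec3 R) j i l :
  ph_gradV tri P F j i l = ph_gradS tri P (fun v => F v 0 i) j 0 l.
Proof. exact: mxE. Qed.

Lemma frob_gradV P (F G : 'I_nV -> vec3 R) j :
  ph_frob (ph_gradV tri P F j) (ph_gradV tri P G j) =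
  \sum_(i < 3) ph_dot (ph_gradS tri P (fun v => F v 0 i) j) (ph_gradS tri P (fun v => G v 0 i) j).
Proof. by rewrite frobE sum_ord3 !dotE !gradVE. Qed.

Lemma sum_dot_grad_numerator P Q j :
  \sum_(i < 3) ph_dot (grad_numerator P (fun v => Q v 0 i) j)
                      (grad_numerator P (fun v => Q v 0 i) j) = gram_pairing P Q j.
Proof. by rewrite sum_ord3 /gram_pairing /edge !dotE /grad_numerator !mxE; ring. Qed.

Lemma frob_gradV_self P Q j : ph_jac tri P j != 0 ->
  ph_frob (ph_gradV tri P Q j) (ph_gradV tri P Q j) =
  (ph_dot (ph_jac tri P j) (ph_jac tri P j))^-1 * gram_pairing P Q j.
Proof.
move=> jac_neq0; rewrite frob_gradV -sum_dot_grad_numerator mulr_sumr.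
by apply: eq_bigr => i _; rewrite dot_gradS.
Qed.

Lemma frob_gradV_id P j : ph_jac tri P j != 0 ->
  ph_frob (ph_gradV tri P P j) (ph_gradV tri P P j) = 2.
Proof.
move=> jac_neq0; rewrite frob_gradV_self //.
have -> : gram_pairing P P j = 2 * ph_dot (ph_jac tri P j) (ph_jac tri P j).
  by rewrite dot_jac /gram_pairing; ring.
by rewrite mulrCA mulVf ?mulr1 // gt_eqF ?dot_self_gt0.
Qed.

Lemma eq_gradS P f g j : (forall v, f v = g v) -> ph_gradS tri P f j = ph_gradS tri P g j.
Proof. by move=> fg; rewrite /ph_gradS !fg. Qed.

Lemma gradSB P f g j :
  ph_gradS tri P (fun v => f v - g v) j = ph_gradS tri P f j - ph_gradS tri P g j.
Proof.
have comb3B (a a' b b' c c' : R) (x y z : vec3 R) :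
    (a - a') *: x + (b - b') *: y + (c - c') *: z
    = a *: x + b *: y + c *: z - (a' *: x + b' *: y + c' *: z).
  by apply/rowP => i; rewrite !mxE; ring.
by rewrite /ph_gradS -scalerBr comb3B.
Qed.

Lemma gradVB P (F G : 'I_nV -> vec3 R) j :
  ph_gradV tri P (fun v => F v - G v) j = ph_gradV tri P F j - ph_gradV tri P G j.
Proof.
apply/matrixP => i l; rewrite gradVE.
rewrite (@eq_gradS _ _ (fun v => F v 0 i - G v 0 i)) => [|v /=]; last by rewrite !mxE.
rewrite gradSB [LHS]mxE [RHS]mxE gradVE; congr (_ + _).
by rewrite [LHS]mxE [RHS]mxE gradVE.
Qed.

Lemma area_le_half_frob P Q j : ph_jac tri P j != 0 ->
  ph_area tri Q j <= ph_area tri P j * (2^-1 * ph_frob (ph_gradV tri P Q j) (ph_gradV tri P Q j)).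
Proof.
move=> jac_neq0; rewrite frob_gradV_self //.
have dP_gt0 := dot_self_gt0 jac_neq0.
have T_ge0 : 0 <= gram_pairing P Q j.
  by rewrite -sum_dot_grad_numerator sumr_ge0 // => i _; apply: dot_self_ge0.
have cofactor : 4 * ph_dot (ph_jac tri P j) (ph_jac tri P j) * ph_dot (ph_jac tri Q j) (ph_jac tri Q j)
                <= gram_pairing P Q j ^+ 2.
  rewrite (dot_jac P) (dot_jac Q); apply: gram_cofactor_ineq.
  by rewrite -dot_jac dot_self_ge0.
have := sqrt_le_ratio dP_gt0 (dot_self_ge0 _) T_ge0 cofactor.
rewrite /ph_area /ph_vnorm; move: (Num.sqrt (ph_dot (ph_jac tri Q j) _)) => sQ le_sQ.
have sP_gt0 : 0 < Num.sqrt (ph_dot (ph_jac tri P j) (ph_jac tri P j)) by rewrite sqrtr_gt0.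
move: (ph_dot (ph_jac tri P j) _) (gram_pairing P Q j) dP_gt0 sP_gt0 le_sQ.
move=> dP T dP_gt0 sP_gt0 le_sQ.
have -> : Num.sqrt dP / 2 * (2^-1 * (dP^-1 * T)) = T / (2 * Num.sqrt dP) / 2.
  move: (Num.sqrt dP) (sqr_sqrtr (ltW dP_gt0)) sP_gt0 => sP <- sP_gt0.
  by field; rewrite gt_eqF.
by rewrite ler_wpM2r ?invr_ge0 ?ler0n.
Qed.

Lemma area_le_first_variation P Q j : ph_jac tri P j != 0 ->
  ph_area tri Q j <=
  ph_area tri P j * (1 + ph_frob (ph_gradV tri P Q j) (ph_gradV tri P (fun v => Q v - P v) j)).
Proof.
move=> jac_neq0; apply: (le_trans (area_le_half_frob Q jac_neq0)).
rewrite ler_wpM2l ?area_ge0 // gradVB frob_half_le //.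
exact: frob_gradV_id.
Qed.

End SurfaceGradient.

Section LumpedQuadrature.
Variables (R : realType) (nV J : nat) (tri : 'I_J -> 'I_3 -> 'I_nV).
Implicit Types (P Q : 'I_nV -> vec3 R) (F G : 'I_J -> 'I_3 -> R).

Definition lumped P F : R := 3^-1 * \sum_(j < J) \sum_(k < 3) ph_area tri P j * F j k.

Lemma ip_sE P (u v : 'I_J -> 'I_3 -> R) :
  ph_ip_s tri P u v = lumped P (fun j k => u j k * v j k).
Proof. by []. Qed.

Lemma ip_vE P (u v : 'I_J -> 'I_3 -> vec3 R) :
  ph_ip_v tri P u v = lumped P (fun j k => ph_dot (u j k) (v j k)).
Proof. by []. Qed.

Lemma ip_mE P (U V : 'I_J -> 'I_3 -> mat3 R) :
  ph_ip_m tri P U V = lumped P (fun j k => ph_frob (U j k) (V j k)).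
Proof. by []. Qed.

Lemma eq_lumped P F G : (forall j k, F j k = G j k) -> lumped P F = lumped P G.
Proof.
by move=> FG; congr (_ * _); apply: eq_bigr => j _; apply: eq_bigr => k _; rewrite FG.
Qed.

Lemma lumped0 P : lumped P (fun _ _ => 0) = 0.
Proof. by rewrite /lumped big1 ?mulr0 // => j _; rewrite big1 // => k _; rewrite mulr0. Qed.

Lemma lumpedD P F G : lumped P (fun j k => F j k + G j k) = lumped P F + lumped P G.
Proof.
rewrite /lumped -mulrDr -big_split; congr (_ * _); apply: eq_bigr => j _.
by rewrite -big_split; apply: eq_bigr => k _; rewrite mulrDr.
Qed.

Lemma lumpedZ P (c : R) F : lumped P (fun j k => c * F j k) = c * lumped P F.
Proof.
rewrite /lumped [RHS]mulrCA; congr (_ * _); rewrite mulr_sumr; apply: eq_bigr => j _.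
by rewrite mulr_sumr; apply: eq_bigr => k _; rewrite mulrCA.
Qed.

Lemma lumpedB P F G : lumped P (fun j k => F j k - G j k) = lumped P F - lumped P G.
Proof.
rewrite (@eq_lumped P _ (fun j k => F j k + (-1) * G j k)) => [|j k]; last by rewrite mulN1r.
by rewrite lumpedD lumpedZ mulN1r.
Qed.

Lemma ler_lumped P F G : (forall j k, F j k <= G j k) -> lumped P F <= lumped P G.
Proof.
move=> FG; rewrite ler_wpM2l ?invr_ge0 ?ler0n //.
by apply: ler_sum => j _; apply: ler_sum => k _; rewrite ler_wpM2l ?area_ge0.
Qed.

Lemma lumped_le_area P Q (g : 'I_J -> R) F :
  (forall j, ph_area tri Q j <= ph_area tri P j * g j) -> (forall j k, 0 <= F j k) ->
  lumped Q F <= lumped P (fun j k => g j * F j k).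
Proof.
move=> area_le F_ge0; rewrite ler_wpM2l ?invr_ge0 ?ler0n //.
apply: ler_sum => j _; apply: ler_sum => k _.
by rewrite mulrA ler_wpM2r.
Qed.

End LumpedQuadrature.

Section SchemeEnergy.
Variables (R : realType) (nV J : nat) (tri : 'I_J -> 'I_3 -> 'I_nV).
Variables (tau : R) (Xm wm X1 : 'I_nV -> vec3 R) (Hm V1 H1 : 'I_nV -> R).
Hypothesis step : ph_scheme_step tri tau Xm wm Hm X1 V1 H1.

Let stretch j := ph_frob (ph_gradV tri Xm X1 j) (ph_gradV tri Xm (fun v => X1 v - Xm v) j).

Lemma scheme_tested_sum : tau != 0 ->
  lumped tri Xm (fun j k => (H1 (tri j k) - Hm (tri j k)) * H1 (tri j k)
    + tau * (V1 (tri j k) * V1 (tri j k)) + 2^-1 * H1 (tri j k) ^+ 2 * stretch j) = 0.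
Proof.
move=> tau_neq0; case: step => eqV [eqF eqH].
move: (eqV V1) (eqF (fun v => X1 v - Xm v)) (eqH H1).
rewrite !ip_sE ip_vE !ip_mE => eV eF eH.
have eVF : lumped tri Xm (fun j k => ph_dot (V1 (tri j k) *: ph_normal tri Xm j)
                                        (X1 (tri j k) - Xm (tri j k)))
          = tau * lumped tri Xm (fun j k => V1 (tri j k) * V1 (tri j k)).
  rewrite -eV -lumpedZ; apply: eq_lumped => j k.
  by rewrite dotZl (dotC (ph_normal tri Xm j)) dotZl /ph_lift_s; field.
rewrite !lumpedD eH lumpedZ -eVF eF -!lumpedD -(lumped0 tri Xm).
by apply: eq_lumped => j k; apply: frob_cancel.
Qed.

Lemma scheme_energy_identity : tau != 0 ->
  lumped tri Xm (fun j k => (1 + stretch j) * (H1 (tri j k) * H1 (tri j k))) =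
  lumped tri Xm (fun j k => Hm (tri j k) * Hm (tri j k) - (H1 (tri j k) - Hm (tri j k)) ^+ 2
                            - 2 * tau * (V1 (tri j k) * V1 (tri j k))).
Proof.
move=> tau_neq0; apply/eqP; rewrite -subr_eq0 -lumpedB.
rewrite -[0](mulr0 2) -(scheme_tested_sum tau_neq0) -lumpedZ.
by apply/eqP/eq_lumped => j k; field.
Qed.

Lemma willmore_step : 0 < tau -> ph_nondegenerate tri Xm ->
  ph_willmore tri X1 H1 <= ph_willmore tri Xm Hm.
Proof.
move=> tau_gt0 nondeg; rewrite /ph_willmore !ip_sE ler_pM2l ?invr_gt0 ?ltr0n //.
apply: le_trans (lumped_le_area (g := fun j => 1 + stretch j) _ _) _.
- by move=> j; apply: area_le_first_variation.
- by move=> j k; rewrite /ph_lift_s -expr2 sqr_ge0.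
rewrite scheme_energy_identity ?gt_eqF //; apply: ler_lumped => j k.
have tauV_ge0 : 0 <= 2 * tau * (V1 (tri j k) * V1 (tri j k)).
  by rewrite -expr2 mulr_ge0 ?sqr_ge0 // mulr_ge0 // ltW.
by rewrite /ph_lift_s -addrA gerDl -opprD oppr_le0 addr_ge0 ?sqr_ge0.
Qed.

End SchemeEnergy.

Theorem theorem3p1 (R : realType) (nV J : nat) (tri : 'I_J -> 'I_3 -> 'I_nV)
  (tau : R) (X : nat -> 'I_nV -> vec3 R) (V H : nat -> 'I_nV -> R)
  (w : nat -> 'I_nV -> vec3 R) :
  0 < tau ->
  ph_closed_mesh tri ->
  (forall m : nat, ph_nondegenerate tri (X m)) ->
  (forall m : nat,
     ph_scheme_step tri tau (X m) (w m) (H m) (X m.+1) (V m.+1) (H m.+1)) ->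
  forall m : nat,
    ph_willmore tri (X m.+1) (H m.+1) <= ph_willmore tri (X m) (H m) /\
    ph_willmore tri (X m) (H m) <= ph_willmore tri (X 0%N) (H 0%N).
Proof.
(* The estimate is triangle by triangle. *)
move=> tau_gt0 _ nondeg step.
have decay k : ph_willmore tri (X k.+1) (H k.+1) <= ph_willmore tri (X k) (H k).
  exact: willmore_step (step k) tau_gt0 (nondeg k).
move=> m; split; first exact: decay.
by elim: m => [|m IH]; [exact: lexx | exact: le_trans (decay m) IH].
Qed.
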